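(* Let $\Phi$ be an irreducible crystallographic root system with simple system $S$ and positive system $\Phi^+$, ordered as the root poset. If $\alpha,\beta,\gamma\in\Phi^+$, $\beta+\gamma\in\Phi^+$ and $\alpha\le\beta+\gamma$, then $\alpha\le\beta$, or $\alpha\le\gamma$, or $\alpha=\beta'+\gamma'$ for some $\beta',\gamma'\in\Phi^+$ with $\beta'\le\beta$ and $\gamma'\le\gamma$.
   Context: The root poset is $\Phi^+$ with the partial order $\alpha\le\beta$ iff $\beta-\alpha$ is a linear combination of simple roots (elements of $S$) with nonnegative integer coefficients. *)

From HB Require Import structures.
From mathcomp Require Import all_boot all_order all_algebra.
Set Implicit Arguments. Unset Strict Implicit. Unset Printing Implicit Defensive.
Import Order.TTheory GRing.Theory Num.Theory.
Local Open Scope ring_scope.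

Section RootSystems.
Variables (R : realFieldType) (n : nat).
Notation V := 'rV[R]_n.

Definition dot (u v : V) : R := (u *m v^T) 0 0.

Definition refl (a x : V) : V := x - ((2 * dot x a) / dot a a) *: a.

Definition root_system (Phi : seq V) : Prop :=
  [/\ (0 : V) \notin Phi,
      (forall v : V, exists c : 'I_(size Phi) -> R,
          v = \sum_(i < size Phi) c i *: Phi`_i),
      (forall a b, a \in Phi -> b \in Phi -> refl a b \in Phi),
      (forall a (c : R), a \in Phi -> c *: a \in Phi -> c = 1 \/ c = -1) &
      (forall a b, a \in Phi -> b \in Phi ->
          exists z : int, (2 * dot b a) / dot a a = z%:~R)].

Definition irreducible_rs (Phi : seq V) : Prop :=
  forall P : pred V,
    (forall a b, a \in Phi -> b \in Phi -> P a -> ~~ P b -> dot a b = 0) ->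
    all P Phi \/ all (predC P) Phi.

Definition simple_system (Phi S : seq V) : Prop :=
  [/\ {subset S <= Phi},
      uniq S,
      (forall c : 'I_(size S) -> R,
          \sum_(i < size S) c i *: S`_i = 0 -> forall i, c i = 0) &
      (forall a, a \in Phi -> exists c : 'I_(size S) -> R,
          a = \sum_(i < size S) c i *: S`_i /\
          ((forall i, 0 <= c i) \/ (forall i, c i <= 0)))].

Definition positive_root (Phi S : seq V) (a : V) : Prop :=
  a \in Phi /\ exists c : 'I_(size S) -> R,
    a = \sum_(i < size S) c i *: S`_i /\ (forall i, 0 <= c i).

Definition root_le (S : seq V) (a b : V) : Prop :=
  exists k : 'I_(size S) -> nat, b - a = \sum_(i < size S) (k i)%:R *: S`_i.

End RootSystems.

(* Induction on the height of (beta + gamma) - alpha = \sum_i k_i s_i. As this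
   vector has positive square length, some simple root s in its support has
   ((beta + gamma) - alpha, s) > 0. If (beta + gamma, s) > 0, say (beta, s) > 0,
   then either beta = s and alpha <= gamma, or beta - s and beta - s + gamma
   are positive roots and induction applies to beta - s. Otherwise
   (alpha, s) < 0, so alpha + s is a positive root below beta + gamma; induction
   gives alpha + s <= beta, alpha + s <= gamma, or alpha + s = beta' + gamma',
   and in the last case induction at height one splits alpha. The basic tool
   is that x - y is a root whenever x != y are roots with (x, y) > 0. *)

From mathcomp Require Import all_boot all_order all_algebra.
From mathcomp Require Import lra zify.
Import Order.TTheory GRing.Theory Num.Theory.
Local Open Scope ring_scope.
Set Implicit Arguments. Unset Strict Implicit. Unset Printing Implicit Defensive.

Section Dot.
Variables (R : realFieldType) (n : nat).
Notation V := 'rV[R]_n.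
Implicit Types u v w : V.

Lemma dotE u v : dot u v = \sum_j u 0 j * v 0 j.
Proof. by rewrite /dot !mxE; apply: eq_bigr => j _; rewrite mxE. Qed.

Lemma dotC u v : dot u v = dot v u.
Proof. by rewrite !dotE; apply: eq_bigr => j _; rewrite mulrC. Qed.

Lemma dotDl u v w : dot (u + v) w = dot u w + dot v w.
Proof. by rewrite !dotE -big_split; apply: eq_bigr => j _; rewrite mxE mulrDl. Qed.

Lemma dotZl (c : R) u w : dot (c *: u) w = c * dot u w.
Proof. by rewrite !dotE mulr_sumr; apply: eq_bigr => j _; rewrite mxE mulrA. Qed.

Lemma dotNl u w : dot (- u) w = - dot u w.
Proof. by rewrite -scaleN1r dotZl mulN1r. Qed.

Lemma dotBl u v w : dot (u - v) w = dot u w - dot v w.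
Proof. by rewrite dotDl dotNl. Qed.

Lemma dotDr u v w : dot w (u + v) = dot w u + dot w v.
Proof. by rewrite dotC dotDl !(dotC w). Qed.

Lemma dotBr u v w : dot w (u - v) = dot w u - dot w v.
Proof. by rewrite dotC dotBl !(dotC w). Qed.

Lemma dot_suml m (F : 'I_m -> V) w : dot (\sum_i F i) w = \sum_i dot (F i) w.
Proof.
rewrite dotE; under eq_bigr => j _ do rewrite summxE mulr_suml.
by rewrite exchange_big; apply: eq_bigr => i _; rewrite dotE.
Qed.

Lemma dot_ge0 v : 0 <= dot v v.
Proof. by rewrite dotE; apply: sumr_ge0 => j _; rewrite -expr2 sqr_ge0. Qed.

Lemma dot_eq0 v : (dot v v == 0) = (v == 0).
Proof.
apply/eqP/eqP => [|->]; last by rewrite dotE big1 // => j _; rewrite mxE mul0r.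
rewrite dotE => /psumr_eq0P v0; apply/rowP => j; rewrite mxE.
have /eqP := v0 (fun i _ => sqr_ge0 (v 0 i)) j isT.
by rewrite mulf_eq0 orbb => /eqP.
Qed.

Lemma dot_gt0 v : (0 < dot v v) = (v != 0).
Proof. by rewrite lt_def dot_ge0 andbT dot_eq0. Qed.

End Dot.

Section RootSystem.
Variables (R : realFieldType) (n : nat) (Phi : seq 'rV[R]_n).
Hypothesis hPhi : root_system Phi.
Implicit Types x y : 'rV[R]_n.

Lemma root_neq0 x : x \in Phi -> x != 0.
Proof. by case: hPhi => Phi0 _ _ _ _; apply: contraTneq => ->. Qed.

Lemma dot_root_gt0 x : x \in Phi -> 0 < dot x x.
Proof. by move=> /root_neq0; rewrite dot_gt0. Qed.

Lemma root_systemN x : x \in Phi -> - x \in Phi.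
Proof.
move=> Hx; case: hPhi => _ _ Hrefl _ _; have := Hrefl x x Hx Hx.
rewrite /refl -mulrA divff ?mulr1 ?gt_eqF ?dot_root_gt0 //.
by rewrite scalerDl scale1r opprD addrA subrr add0r.
Qed.

(* The Cartan integers 2(x,y)/(y,y) and 2(x,y)/(x,x) are positive; if one
   of them is 1 the corresponding reflection yields +-(x - y), and if both are
   at least 2 then (x - y, x - y) <= 0. *)
Lemma rootB_of_dot_gt0 x y : x \in Phi -> y \in Phi -> 0 < dot x y -> x != y ->
  x - y \in Phi.
Proof.
move=> Hx Hy xy_gt0 neq_xy; case: hPhi => _ _ Hrefl _ Hint.
have xx_gt0 := dot_root_gt0 Hx; have yy_gt0 := dot_root_gt0 Hy.
have [z1 Hz1] := Hint y x Hy Hx; have [z2 Hz2] := Hint x y Hx Hy.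
have z1_gt0 : (0 < z1)%R by rewrite -(ltr0z R) -Hz1 divr_gt0 ?mulr_gt0.
have z2_gt0 : (0 < z2)%R by rewrite -(ltr0z R) -Hz2 divr_gt0 ?mulr_gt0 // dotC.
have [z1_lt2|z1_ge2] := ltP z1 2.
  have z1E : z1 = 1 by lia.
  by move: (Hrefl y x Hy Hx); rewrite /refl Hz1 z1E scale1r.
have [z2_lt2|z2_ge2] := ltP z2 2.
  have z2E : z2 = 1 by lia.
  move: (Hrefl x y Hx Hy); rewrite /refl Hz2 z2E scale1r => /root_systemN.
  by rewrite opprB.
have yy_le : dot y y <= dot x y.
  have : 2%:~R <= z1%:~R :> R by rewrite ler_int.
  by rewrite -Hz1 ler_pdivlMr //; nra.
have xx_le : dot x x <= dot x y.
  have : 2%:~R <= z2%:~R :> R by rewrite ler_int.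
  rewrite -Hz2 ler_pdivlMr // (dotC y x); nra.
have : dot (x - y) (x - y) <= 0 by rewrite !dotBl !dotBr (dotC y x); lra.
by rewrite leNgt dot_gt0 subr_eq0 neq_xy.
Qed.

End RootSystem.

Section SimpleSystem.
Variables (R : realFieldType) (n : nat) (Phi S : seq 'rV[R]_n).
Hypothesis hPhi : root_system Phi.
Hypothesis hS : simple_system Phi S.
Notation V := 'rV[R]_n.
Notation m := (size S).
Notation pos := (positive_root Phi S).
Notation comb c := (\sum_(i < m) c i *: S`_i).
Notation ncomb k := (comb (fun i => (k i)%:R)).
Implicit Types (a b c x y z : V) (i j : 'I_m) (k : 'I_m -> nat).

Lemma simple_root i : S`_i \in Phi.
Proof. by case: hS => Ssub _ _ _; apply: Ssub; apply: mem_nth. Qed.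

Lemma comb_inj (c d : 'I_m -> R) : comb c = comb d -> c =1 d.
Proof.
move=> cd i; case: hS => _ _ Sfree _; apply/eqP; rewrite -subr_eq0; apply/eqP.
apply: (Sfree (fun j => c j - d j)).
by under eq_bigr => j _ do rewrite scalerBl; rewrite sumrB cd subrr.
Qed.

Lemma comb_delta i : \sum_j (j == i)%:R *: S`_j = S`_i.
Proof.
rewrite (bigD1 i) //= eqxx scale1r big1 ?addr0 // => j /negbTE ->.
by rewrite scale0r.
Qed.

Lemma sum_delta i : (\sum_j nat_of_bool (j == i) = 1)%N.
Proof. by rewrite (bigD1 i) //= eqxx big1 // => j /negbTE ->. Qed.

Lemma ncomb_eq0 k : (ncomb k == 0) = [forall j, k j == 0%N].
Proof.
apply/eqP/forallP => [k0 j|k0]; last first.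
  by rewrite big1 // => j _; rewrite (eqP (k0 j)) scale0r.
have := @comb_inj (fun j => (k j)%:R) (fun=> 0).
rewrite k0 big1 => [/(_ erefl j) /eqP|i _]; last by rewrite scale0r.
by rewrite pnatr_eq0.
Qed.

Definition decr_at k i j := (k j - (j == i))%N.

Lemma ncomb_decr_at k i : (0 < k i)%N -> ncomb k = ncomb (decr_at k i) + S`_i.
Proof.
move=> ki_gt0; rewrite -comb_delta -big_split; apply: eq_bigr => j _ /=.
rewrite /decr_at -scalerDl -natrD; congr (_%:R *: _).
by case: eqP => [->|]; lia.
Qed.

Lemma sum_decr_at k i : (0 < k i)%N ->
  (\sum_j k j = (\sum_j decr_at k i j).+1)%N.
Proof.
move=> ki_gt0; rewrite (bigD1 i) //= [in RHS](bigD1 i) //= /decr_at eqxx.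
rewrite [in RHS](eq_bigr k) => [|j /negbTE ->]; last by rewrite subn0.
by rewrite subn1 -addSn prednK.
Qed.

(* Since (D, D) > 0 for D = \sum_j k_j s_j, some simple root s_j with k_j > 0
   has (D, s_j) > 0. *)
Lemma ncomb_dot_simple_gt0 k : ~~ [forall j, k j == 0%N] ->
  exists2 i, (0 < k i)%N & 0 < dot (ncomb k) S`_i.
Proof.
rewrite -ncomb_eq0 -dot_gt0 {1}dot_suml => D_gt0.
apply/exists_inP; apply: contraTT D_gt0 => /exists_inPn none; rewrite -leNgt.
apply: sumr_le0 => j _; rewrite dotZl.
have [kj0|kj_gt0] := posnP (k j); first by rewrite kj0 mul0r.
by rewrite mulr_ge0_le0 // dotC leNgt; apply: none.
Qed.

Lemma positive_simple i : pos S`_i.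
Proof.
split; first exact: simple_root.
exists (fun j => (j == i)%:R).
by rewrite /= comb_delta; split=> // j; rewrite ler0n.
Qed.

Lemma positiveD x y : pos x -> pos y -> x + y \in Phi -> pos (x + y).
Proof.
move=> [_ [c [-> c_ge0]]] [_ [d [-> d_ge0]]] xy_root; split=> //.
exists (fun j => c j + d j); split=> [|j]; last by rewrite addr_ge0.
by rewrite -big_split; apply: eq_bigr => j _; rewrite scalerDl.
Qed.

Lemma positiveD_neq0 x y : pos x -> pos y -> x + y != 0.
Proof.
move=> [x_root [c [xE c_ge0]]] [_ [d [dE d_ge0]]]; apply/eqP => xy0.
have cd0 : forall j, c j + d j = 0.
  case: hS => _ _ Sfree _; apply: Sfree.
  by rewrite -[RHS]xy0 xE dE -big_split; apply: eq_bigr => j _; rewrite scalerDl.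
have c0 j : c j = 0 by have := cd0 j; have := c_ge0 j; have := d_ge0 j; lra.
move/(root_neq0 hPhi): x_root; rewrite xE big1 ?eqxx // => j _.
by rewrite c0 scale0r.
Qed.

(* A negative root x - s_i would force x to be a multiple of s_i, hence equal
   to s_i since Phi is reduced. *)
Lemma positiveB_simple x i : pos x -> x - S`_i \in Phi -> x != S`_i ->
  pos (x - S`_i).
Proof.
move=> [x_root [c [xE c_ge0]]] xs_root neq_xs; split=> //.
case: hS => _ _ _ /(_ _ xs_root) [d [dE [d_ge0|d_le0]]]; first by exists d.
have cd : (fun j => c j - (j == i)%:R) =1 d.
  apply: comb_inj; rewrite /= -dE xE -[in RHS]comb_delta -sumrB.
  by apply: eq_bigr => j _; rewrite scalerBl.
have c0 j : j != i -> c j = 0.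
  move=> /negbTE ji; have := cd j; rewrite /= ji subr0.
  by have := c_ge0 j; have := d_le0 j; lra.
have xE' : x = c i *: S`_i.
  by rewrite xE (bigD1 i) //= big1 ?addr0 // => j /c0 ->; rewrite scale0r.
case: hPhi => _ _ _ reduced _.
have ciS_root : c i *: S`_i \in Phi by rewrite -xE'.
have [ci1|ciN1] := reduced _ (c i) (simple_root i) ciS_root.
  by rewrite xE' ci1 scale1r eqxx in neq_xs.
by have := c_ge0 i; rewrite ciN1; lra.
Qed.

Lemma root_le_refl x : root_le S x x.
Proof. by exists (fun=> 0%N); rewrite subrr big1 // => j _; rewrite scale0r. Qed.

Lemma root_le_trans x y z : root_le S x y -> root_le S y z -> root_le S x z.
Proof.
move=> [k1 E1] [k2 E2]; exists (fun j => k1 j + k2 j)%N.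
rewrite -[z - x](subrKA y) E1 E2 addrC -big_split.
by apply: eq_bigr => j _; rewrite natrD scalerDl.
Qed.

Lemma root_le_addsimple x i : root_le S x (x + S`_i).
Proof.
exists (fun j => nat_of_bool (j == i)).
by rewrite addrC addKr -[LHS](comb_delta i).
Qed.

Lemma root_le_subsimple x i : root_le S (x - S`_i) x.
Proof. by have := root_le_addsimple (x - S`_i) i; rewrite subrK. Qed.

Definition root_le_split a b c := root_le S a b \/ root_le S a c \/
  exists b' c',
    [/\ pos b', pos c', root_le S b' b, root_le S c' c & a = b' + c'].

Lemma root_le_split_trans a b c b2 c2 :
  root_le_split a b2 c2 -> root_le S b2 b -> root_le S c2 c ->
  root_le_split a b c.
Proof.
move=> [ab2|[ac2|[b' [c' [Pb' Pc' b'b2 c'c2 aE]]]]] b2b c2c.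
- by left; apply: root_le_trans b2b.
- by right; left; apply: root_le_trans c2c.
- right; right; exists b', c'.
  by split=> //; [apply: root_le_trans b2b | apply: root_le_trans c2c].
Qed.

Lemma root_le_splitC a b c : root_le_split a b c -> root_le_split a c b.
Proof.
move=> [ab|[ac|[b' [c' [Pb' Pc' b'b c'c aE]]]]]; [by right; left|by left|].
by right; right; exists c', b'; split=> //; rewrite addrC.
Qed.

Lemma root_le_split_sum b c : pos b -> pos c -> root_le_split (b + c) b c.
Proof. by right; right; exists b, c; split=> //; apply: root_le_refl. Qed.

Lemma root_le_split_cover_dot_gt0 a b c i : pos a -> pos b -> pos c ->
  b + c = a + S`_i -> 0 < dot a b -> root_le_split a b c.
Proof.
move=> Pa Pb Pc E ab_gt0.
have [<-|neq_ab] := eqVneq a b; first by left; apply: root_le_refl.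
have csE : c - S`_i = a - b.
  by apply/eqP; rewrite subr_eq addrAC -E addrC addKr.
have cs_root : c - S`_i \in Phi.
  by rewrite csE; apply: rootB_of_dot_gt0 => //; [case: Pa | case: Pb].
have neq_cs : c != S`_i.
  by apply: contraNneq neq_ab => cs; apply/eqP/(addIr S`_i); rewrite -E cs.
right; right; exists b, (c - S`_i); split.
- exact: Pb.
- exact: positiveB_simple.
- exact: root_le_refl.
- exact: root_le_subsimple.
- by rewrite addrA E addrK.
Qed.

(* Here (a, b + c) = (a, a) + (a, s_i) > 0 because (a + s_i, a + s_i) > 0 while
   (a + s_i, s_i) <= 0; so (a, b) > 0 or (a, c) > 0. *)
Lemma root_le_split_cover a b c i : pos a -> pos b -> pos c ->
  b + c = a + S`_i -> dot (b + c) S`_i <= 0 -> root_le_split a b c.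
Proof.
move=> Pa Pb Pc E bcs_le0.
have : 0 < dot (b + c) (b + c) by rewrite dot_gt0 positiveD_neq0.
rewrite E in bcs_le0 * => as_gt0.
have abc_gt0 : 0 < dot a b + dot a c.
  move: as_gt0 bcs_le0; rewrite -dotDr E !dotDl !dotDr (dotC S`_i a); lra.
have [ab_gt0|ab_le0] := ltP 0 (dot a b).
  exact: (root_le_split_cover_dot_gt0 Pa Pb Pc E).
apply/root_le_splitC/(root_le_split_cover_dot_gt0 Pa Pc Pb (i := i)).
  by rewrite addrC.
lra.
Qed.

Lemma positiveD_simple_of_dot_lt0 a i : pos a -> dot a S`_i < 0 ->
  pos (a + S`_i).
Proof.
move=> Pa as_lt0; apply: positiveD => //; first exact: positive_simple.
have : a - (- S`_i) \in Phi.
  apply: rootB_of_dot_gt0 => //.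
  - by case: Pa.
  - exact: (root_systemN hPhi (simple_root i)).
  - by rewrite dotC dotNl dotC oppr_gt0.
  - by rewrite -addr_eq0; apply/positiveD_neq0/positive_simple.
by rewrite opprK.
Qed.

Lemma root_le_split_of_ncomb0 a b c k : pos b -> pos c ->
  [forall j, k j == 0%N] -> b + c - a = ncomb k -> root_le_split a b c.
Proof.
rewrite -ncomb_eq0 => Pb Pc /eqP-> /eqP; rewrite subr_eq0 => /eqP <-.
exact: root_le_split_sum.
Qed.

Lemma root_le_split_descend a b c i : pos b -> pos c -> pos (b + c) ->
  b != S`_i -> 0 < dot b S`_i -> 0 < dot (b + c) S`_i ->
  (pos (b - S`_i) -> pos (b - S`_i + c) -> root_le_split a (b - S`_i) c) ->
  root_le_split a b c.
Proof.
move=> Pb Pc Pbc neq_bs bs_gt0 bcs_gt0 IH.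
have Pbs : pos (b - S`_i).
  apply: positiveB_simple => //.
  by apply: rootB_of_dot_gt0 => //; [case: Pb | exact: simple_root].
have neq_bcs : b + c != S`_i.
  by rewrite -subr_eq0 addrAC; apply: positiveD_neq0.
have Pbsc : pos (b - S`_i + c).
  apply: positiveD => //; rewrite addrAC.
  by apply: rootB_of_dot_gt0 => //; [case: Pbc | exact: simple_root].
exact: root_le_split_trans (IH Pbs Pbsc) (root_le_subsimple b i) (root_le_refl c).
Qed.

Lemma root_le_split_of_add_simple a b c i : root_le_split (a + S`_i) b c ->
  (forall b' c', pos b' -> pos c' -> b' + c' = a + S`_i ->
    root_le_split a b' c') ->
  root_le_split a b c.
Proof.
move=> [asb|[asc|[b' [c' [Pb' Pc' b'b c'c E]]]]] IH.
- by left; apply: root_le_trans asb; apply: root_le_addsimple.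
- by right; left; apply: root_le_trans asc; apply: root_le_addsimple.
- exact: root_le_split_trans (IH _ _ Pb' Pc' (esym E)) b'b c'c.
Qed.

Lemma root_le_split_of_height h a b c k : (\sum_j k j <= h)%N ->
  pos a -> pos b -> pos c -> pos (b + c) -> b + c - a = ncomb k ->
  root_le_split a b c.
Proof.
elim: h => [|h IH] in a b c k *.
  move=> hk _ Pb Pc _; apply: root_le_split_of_ncomb0 => //; apply/forallP => j.
  by move: hk; rewrite leqn0 sum_nat_eq0 => /forallP/(_ j).
move=> hk Pa Pb Pc Pbc E.
have [k0|/ncomb_dot_simple_gt0[i ki_gt0]] := boolP [forall j, k j == 0%N].
  exact: root_le_split_of_ncomb0 E.
rewrite -E => Ds_gt0; rewrite (ncomb_decr_at ki_gt0) in E.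
have hk' : (\sum_j decr_at k i j <= h)%N by rewrite -ltnS -sum_decr_at.
have [bcs_gt0|bcs_le0] := ltP 0 (dot (b + c) S`_i).
  wlog bs_gt0 : b c Pb Pc Pbc E bcs_gt0 {Ds_gt0} / 0 < dot b S`_i.
    move=> hwlog; have [|cs_gt0] := ltP 0 (dot b S`_i); first exact: hwlog.
    apply/root_le_splitC/(hwlog c b); rewrite 1?(addrC c) //.
    by move: bcs_gt0; rewrite dotDl; lra.
  have [bs|neq_bs] := eqVneq b S`_i.
    right; left; exists (decr_at k i); apply: (addIr S`_i).
    by rewrite -E bs addrAC (addrC S`_i).
  apply: (root_le_split_descend (i := i)) => // Pbs Pbsc.
  apply: (IH _ _ _ _ hk') => //.
  by rewrite (addrAC b) (addrAC _ (- S`_i)) E addrK.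
have as_lt0 : dot a S`_i < 0 by move: Ds_gt0; rewrite dotBl; lra.
have [k'0|k'nz] := boolP [forall j, decr_at k i j == 0%N].
  apply: (root_le_split_cover (i := i)) => //.
  move: k'0; rewrite -ncomb_eq0 => /eqP k'0.
  by apply/eqP; rewrite (addrC a) -subr_eq E k'0 add0r.
have Pas := positiveD_simple_of_dot_lt0 Pa as_lt0.
apply: (root_le_split_of_add_simple (IH _ _ _ _ hk' Pas Pb Pc Pbc _)).
  by rewrite opprD addrA E addrK.
move=> b' c' Pb' Pc' E'.
apply: (IH _ _ _ (fun j => nat_of_bool (j == i))) => //.
- by rewrite sum_delta (leq_trans _ hk') // lt0n sum_nat_eq0; exact: k'nz.
- by rewrite E'.
- by rewrite comb_delta E' addrAC subrr add0r.
Qed.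

End SimpleSystem.

Theorem lemma8 (R : realFieldType) (n : nat) (Phi S : seq 'rV[R]_n)
  (hPhi : root_system Phi) (hirr : irreducible_rs Phi)
  (hS : simple_system Phi S)
  (alpha beta gamma : 'rV[R]_n)
  (ha : positive_root Phi S alpha) (hb : positive_root Phi S beta)
  (hc : positive_root Phi S gamma)
  (hbc : positive_root Phi S (beta + gamma))
  (hle : root_le S alpha (beta + gamma)) :
  root_le S alpha beta \/ root_le S alpha gamma \/
  exists beta' gamma',
    [/\ positive_root Phi S beta', positive_root Phi S gamma',
        root_le S beta' beta, root_le S gamma' gamma & alpha = beta' + gamma'].
Proof.
have [k E] := hle.
exact: (root_le_split_of_height hPhi hS (leqnn _) ha hb hc hbc E).
Qed.
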